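(* Let $m,n\ge 2$ be integers and let $\mathcal{A}\in T_{m,n}$. If $\mathcal{A}$ is a nonzero genuinely positive definite tensor, then $-\mathcal{A}$ is not a genuinely positive definite tensor. If $\mathcal{A}$ is a barren tensor, then $-\mathcal{A}$ is also a barren tensor.
   Context: $T_{m,n}$ denotes the set of real $m$th order $n$-dimensional cubic tensors $\mathcal{A}=(a_{i_1\dots i_m})$, $i_1,\dots,i_m\in\{1,\dots,n\}$. For $\mathcal{A}\in T_{m,n}$, $\mathrm{Sym}(\mathcal{A})$ is the unique symmetric tensor $\mathcal{B}$ (entries invariant under permutation of indices) with $\mathcal{B}\mathbf{x}^m=\mathcal{A}\mathbf{x}^m$ for all $\mathbf{x}\in\mathbb{R}^n$, where $\mathcal{A}\mathbf{x}^m=\sum_{i_1,\dots,i_m}a_{i_1\dots i_m}x_{i_1}\cdots x_{i_m}$. For $\mathbf{x}$, $\mathcal{A}\mathbf{x}^{m-1}$ is the vector with $i$th component $\sum_{i_2,\dots,i_m}a_{ii_2\dots i_m}x_{i_2}\cdots x_{i_m}$, and $\mathbf{x}^{[m-1]}=(x_i^{m-1})_i$. A real number $\lambda$ is an H-eigenvalue of $\mathcal{A}$ if there is a nonzero $\mathbf{x}\in\mathbb{R}^n$ with $\mathcal{A}\mathbf{x}^{m-1}=\lambda\mathbf{x}^{[m-1]}$. $\mathcal{A}$ is genuinely positive definite if $\mathrm{Sym}(\mathcal{A})$ has at least one H-eigenvalue and all its H-eigenvalues are positive. $\mathcal{A}$ is a barren tensor if $\mathrm{Sym}(\mathcal{A})$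 has no H-eigenvalue. *)

From mathcomp Require Import all_boot all_order all_algebra all_fingroup.
From mathcomp Require Import reals.
Set Implicit Arguments. Unset Strict Implicit. Unset Printing Implicit Defensive.
Import Order.TTheory GRing.Theory Num.Theory.
Local Open Scope ring_scope.

(* A real m-th order n-dimensional cubic tensor: entries indexed by
   functions i : 'I_m -> 'I_n, i.e. (i_1,...,i_m). *)
Definition tensor (R : realType) (m n : nat) := {ffun 'I_m -> 'I_n} -> R.

Definition tneg (R : realType) m n (A : tensor R m n) : tensor R m n :=
  fun idx => - A idx.

Definition tsym (R : realType) m n (A : tensor R m n) : tensor R m n :=
  fun idx => (m`!%:R)^-1 * \sum_(s : 'S_m) A [ffun k => idx (s k)].

(* A x^{m-1}: i-th component is sum over (i_2,...,i_m) of a_{i i_2..i_m} x_{i_2}..x_{i_m};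
   the first index is the ordinal with value 0. *)
Definition tapply (R : realType) m n (A : tensor R m n) (x : 'I_n -> R) (i : 'I_n) : R :=
  \sum_(idx : {ffun 'I_m -> 'I_n} | [forall k : 'I_m, (val k == 0%N) ==> (idx k == i)])
     A idx * \prod_(k : 'I_m | val k != 0%N) x (idx k).

Definition H_eigenvalue (R : realType) m n (A : tensor R m n) (lambda : R) : Prop :=
  exists x : 'I_n -> R, (exists j, x j != 0) /\
    forall i, tapply A x i = lambda * x i ^+ m.-1.

Definition genuinely_positive_definite (R : realType) m n (A : tensor R m n) : Prop :=
  (exists lambda, H_eigenvalue (tsym A) lambda) /\
  (forall lambda, H_eigenvalue (tsym A) lambda -> 0 < lambda).

Definition barren (R : realType) m n (A : tensor R m n) : Prop :=
  forall lambda, ~ H_eigenvalue (tsym A) lambda.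

From mathcomp Require Import all_boot all_order all_algebra all_fingroup.
From mathcomp Require Import boolp reals.
Import Order.TTheory GRing.Theory Num.Theory.
Local Open Scope ring_scope.

(* Symmetrization and the map x |-> A x^(m-1) both commute with negation, so
   the H-eigenvalues of Sym(-A) are exactly the negatives of those of Sym(A). *)

Lemma tsymN (R : realType) m n (A : tensor R m n) : tsym (tneg A) = tneg (tsym A).
Proof. by apply/funext => idx; rewrite /tsym /tneg sumrN mulrN. Qed.

Lemma tapplyN (R : realType) m n (A : tensor R m n) x i :
  tapply (tneg A) x i = - tapply A x i.
Proof. by rewrite /tapply -sumrN; apply: eq_bigr => idx _; rewrite mulNr. Qed.

Lemma H_eigenvalueN (R : realType) m n (A : tensor R m n) lambda :
  H_eigenvalue (tneg A) lambda <-> H_eigenvalue A (- lambda).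
Proof.
split=> -[x [x_neq0 eigx]]; exists x; split=> // i.
- by rewrite mulNr -eigx tapplyN opprK.
- by rewrite tapplyN eigx mulNr opprK.
Qed.

Theorem proposition2p1 (R : realType) (m n : nat) (hm : (2 <= m)%N) (hn : (2 <= n)%N)
  (A : tensor R m n) :
  ((exists idx, A idx != 0) -> genuinely_positive_definite A ->
     ~ genuinely_positive_definite (tneg A)) /\
  (barren A -> barren (tneg A)).
Proof.
split.
- move=> _ [[lambda eigA] posA] [_ posNA].
  have : 0 < - lambda by apply: posNA; rewrite tsymN H_eigenvalueN opprK.
  by rewrite oppr_gt0 ltNge (ltW (posA _ eigA)).
- by move=> barrenA lambda; rewrite tsymN H_eigenvalueN; apply: barrenA.
Qed.
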